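(* Let $u_o>0$, $\alpha_1,\alpha_2\in\mathbb{R}$, and let $\boldsymbol{u}(x,t)=(u_1,u_2)^T$ be a smooth $\mathbb{C}^2$-valued function. Fix $z\in\mathbb{C}\setminus\{0\}$ and put $k=\frac12\left(z-\frac{u_o^2}{z}\right)$, $\lambda=\frac12\left(z+\frac{u_o^2}{z}\right)$. Suppose $\boldsymbol{\nu}_1(x,t)$ and $\boldsymbol{\nu}_2(x,t)$ are any two $\mathbb{C}^3$-valued solutions of the adjoint Lax system $$\tilde{\boldsymbol{\varphi}}_x=\tilde{\boldsymbol{X}}\tilde{\boldsymbol{\varphi}},\qquad \tilde{\boldsymbol{\varphi}}_t=\tilde{\boldsymbol{T}}\tilde{\boldsymbol{\varphi}}.$$ Then $$\boldsymbol{\nu}(x,t)=e^{ih_2(z,x,t)}\left[\boldsymbol{\nu}_1(x,t)\times\boldsymbol{\nu}_2(x,t)\right]$$ is a solution of the Lax system $\boldsymbol{\varphi}_x=\boldsymbol{X}\boldsymbol{\varphi}$, $\boldsymbol{\varphi}_t=\boldsymbol{T}\boldsymbol{\varphi}$.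
   Context: Notation. $\times$ denotes the (bilinear, unconjugated) cross product on $\mathbb{C}^3$, $\dagger$ denotes the conjugate transpose, and $^*$ denotes complex conjugation. Matrices. Set $$\boldsymbol{U}=\begin{pmatrix}0&-\boldsymbol{u}^\dagger\\ \boldsymbol{u}&0_{2\times2}\end{pmatrix},\qquad \boldsymbol{\sigma}=\mathrm{diag}(1,-1,-1).$$ Lax pair (here $\boldsymbol{U}_x=\partial_x\boldsymbol{U}$, etc.): $$\boldsymbol{X}=-ik\boldsymbol{\sigma}+\boldsymbol{U},$$ $$\boldsymbol{T}=\alpha_1\left[2ik^2\boldsymbol{\sigma}-2k\boldsymbol{U}+i\boldsymbol{\sigma}\left(\boldsymbol{U}^2+u_o^2-\boldsymbol{U}_x\right)\right]+\alpha_2\left[-4ik^3\boldsymbol{\sigma}+4k^2\boldsymbol{U}+2ik\boldsymbol{\sigma}\left(\boldsymbol{U}_x-\boldsymbol{U}^2\right)-\boldsymbol{U}\boldsymbol{U}_x+\boldsymbol{U}_x\boldsymbol{U}-\boldsymbol{U}_{xx}+2\boldsymbol{U}^3\right].$$ Adjoint Lax pair: $$\tilde{\boldsymbol{X}}=ik\boldsymbol{\sigma}+\boldsymbol{U}^*,$$ $$\tilde{\boldsymbol{T}}=\alpha_1\left[-2ik^2\boldsymbol{\sigma}-2k\boldsymbol{U}^*-i\boldsymbol{\sigma}\left((\boldsymbol{U}^* )^2+u_o^2-\boldsymbol{U}_x^*\right)\right]+\alpha_2\left[4ik^3\boldsymbol{\sigma}+4k^2\boldsymbol{U}^*-2ik\boldsymbol{\sigma}\left(\boldsymbol{U}_x^*-(\boldsymbol{U}^*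 )^2\right)+\boldsymbol{U}_x^*\boldsymbol{U}^*-\boldsymbol{U}^*\boldsymbol{U}_x^*-\boldsymbol{U}_{xx}^*+2(\boldsymbol{U}^* )^3\right].$$ Phase function: $$h_2(z,x,t)=kx-\left[\alpha_1(k^2+\lambda^2)-4\alpha_2k^3\right]t.$$ *)

From Stdlib Require Import Reals.
From Coquelicot Require Import Coquelicot.

(* Vectors of C^3 are functions nat -> C (only indices 0,1,2 matter);
   3x3 complex matrices are functions nat -> nat -> C (indices 0,1,2). *)
Definition vec3 := nat -> C.
Definition mat3 := nat -> nat -> C.

Local Open Scope C_scope.

Definition mv (A : mat3) (v : vec3) : vec3 :=
  fun i => A i 0%nat * v 0%nat + A i 1%nat * v 1%nat + A i 2%nat * v 2%nat.
Definition mm (A B : mat3) : mat3 :=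
  fun i j => A i 0%nat * B 0%nat j + A i 1%nat * B 1%nat j + A i 2%nat * B 2%nat j.
Definition madd (A B : mat3) : mat3 := fun i j => A i j + B i j.
Definition msub (A B : mat3) : mat3 := fun i j => A i j - B i j.
Definition mscal (c : C) (A : mat3) : mat3 := fun i j => c * A i j.
Definition mconj (A : mat3) : mat3 := fun i j => Cconj (A i j).
Definition mid : mat3 := fun i j => if Nat.eqb i j then 1 else 0.

Definition sigma : mat3 :=
  fun i j => if Nat.eqb i j then (if Nat.eqb i 0 then 1 else -1) else 0.

(* U = [[0, -u^dagger],[u, 0_{2x2}]] for u = (u1,u2)^T *)
Definition Umat (u1 u2 : C) : mat3 :=
  fun i j =>
    match i, j with
    | O, S O => - Cconj u1
    | O, S (S O) => - Cconj u2
    | S O, O => u1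
    | S (S O), O => u2
    | _, _ => 0
    end.

(* bilinear unconjugated cross product on C^3 *)
Definition cross (a b : vec3) : vec3 :=
  fun i =>
    match i with
    | O => a 1%nat * b 2%nat - a 2%nat * b 1%nat
    | S O => a 2%nat * b 0%nat - a 0%nat * b 2%nat
    | _ => a 0%nat * b 1%nat - a 1%nat * b 0%nat
    end.

Definition vscal (c : C) (v : vec3) : vec3 := fun i => c * v i.

Definition Cexp (w : C) : C :=
  (exp (Re w) * cos (Im w), exp (Re w) * sin (Im w))%R.

Definition kpar (uo : R) (z : C) : C := (z - RtoC (uo ^ 2) / z) / 2.
Definition lpar (uo : R) (z : C) : C := (z + RtoC (uo ^ 2) / z) / 2.

Definition Xmat (k : C) (U : mat3) : mat3 :=
  madd (mscal (- Ci * k) sigma) U.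

Definition Tmat (a1 a2 : R) (uo : R) (k : C) (U Ux Uxx : mat3) : mat3 :=
  madd
    (mscal (RtoC a1)
      (madd (madd (mscal (2 * Ci * k ^ 2) sigma) (mscal (- (2 * k)) U))
            (mscal Ci (mm sigma (msub (madd (mm U U) (mscal (RtoC (uo ^ 2)) mid)) Ux)))))
    (mscal (RtoC a2)
      (madd (madd (madd (madd (madd
        (mscal (- (4 * Ci * k ^ 3)) sigma)
        (mscal (4 * k ^ 2) U))
        (mscal (2 * Ci * k) (mm sigma (msub Ux (mm U U)))))
        (msub (mm Ux U) (mm U Ux)))
        (mscal (-1) Uxx))
        (mscal 2 (mm U (mm U U))))).

(* adjoint Lax pair; Us, Uxs, Uxxs stand for U^*, U_x^*, U_xx^* *)
Definition Xtmat (k : C) (Us : mat3) : mat3 :=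
  madd (mscal (Ci * k) sigma) Us.

Definition Ttmat (a1 a2 : R) (uo : R) (k : C) (Us Uxs Uxxs : mat3) : mat3 :=
  madd
    (mscal (RtoC a1)
      (madd (madd (mscal (- (2 * Ci * k ^ 2)) sigma) (mscal (- (2 * k)) Us))
            (mscal (- Ci) (mm sigma (msub (madd (mm Us Us) (mscal (RtoC (uo ^ 2)) mid)) Uxs)))))
    (mscal (RtoC a2)
      (madd (madd (madd (madd (madd
        (mscal (4 * Ci * k ^ 3) sigma)
        (mscal (4 * k ^ 2) Us))
        (mscal (- (2 * Ci * k)) (mm sigma (msub Uxs (mm Us Us)))))
        (msub (mm Uxs Us) (mm Us Uxs)))
        (mscal (-1) Uxxs))
        (mscal 2 (mm Us (mm Us Us))))).

Definition h2 (a1 a2 uo : R) (z : C) (x t : R) : C :=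
  kpar uo z * RtoC x
  - (RtoC a1 * (kpar uo z ^ 2 + lpar uo z ^ 2) - 4 * RtoC a2 * kpar uo z ^ 3) * RtoC t.

(* Solutions of the adjoint system satisfy nu' = A nu with A = X~ or T~, and the
   cross product carries this to (nu1 x nu2)' = (tr A - A^T)(nu1 x nu2). Since U is
   anti-Hermitian, (U^* )^T = -U, so tr A - A^T is X (resp. T) up to a scalar
   multiple of the identity; the phase e^(i h2) removes exactly that scalar, using
   lambda^2 = k^2 + u_o^2 in the t-equation. *)
From Pilot Require Import Defs.
From Stdlib Require Import Reals Lia.
From Coquelicot Require Import Coquelicot.

Local Open Scope C_scope.

Lemma is_derive_eq_val (f : R -> C) (x : R) (l l' : C) :
  l = l' -> is_derive f x l -> is_derive f x l'.
Proof. intros <-; trivial. Qed.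

Lemma is_derive_Re (f : R -> C) (x : R) (l : C) :
  is_derive f x l -> is_derive (fun y => Re (f y)) x (Re l).
Proof.
  intros Hf. unfold is_derive in *.
  eapply filterdiff_ext_lin.
  - apply (filterdiff_comp f (fun p : prod_NormedModule R_AbsRing R_NormedModule R_NormedModule => fst p)
             _ (fun p : prod_NormedModule R_AbsRing R_NormedModule R_NormedModule => fst p) Hf).
    apply filterdiff_linear, is_linear_fst.
  - reflexivity.
Qed.

Lemma is_derive_Im (f : R -> C) (x : R) (l : C) :
  is_derive f x l -> is_derive (fun y => Im (f y)) x (Im l).
Proof.
  intros Hf. unfold is_derive in *.
  eapply filterdiff_ext_lin.
  - apply (filterdiff_comp f (fun p : prod_NormedModule R_AbsRing R_NormedModule R_NormedModule => snd p)
             _ (fun p : prod_NormedModule R_AbsRing R_NormedModule R_NormedModule => snd p) Hf).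
    apply filterdiff_linear, is_linear_snd.
  - reflexivity.
Qed.

Lemma is_derive_C_parts (f : R -> C) (x : R) (l : C) :
  is_derive (fun y => Re (f y)) x (Re l) -> is_derive (fun y => Im (f y)) x (Im l) ->
  is_derive f x l.
Proof.
  intros Hre Him. destruct l as [a b]. unfold is_derive in *.
  eapply filterdiff_ext_lin.
  - eapply filterdiff_ext.
    2:{ apply (filterdiff_comp'_2 _ _
              (fun u v => (u, v) : prod_NormedModule R_AbsRing R_NormedModule R_NormedModule)
              x _ _ (fun u v => (u, v)) Hre Him).
        apply filterdiff_linear.
        eapply is_linear_ext;
          [| apply (@is_linear_id R_AbsRing (prod_NormedModule R_AbsRing R_NormedModule R_NormedModule))].
        intros [u v]. reflexivity. }
    intros y. simpl. destruct (f y). reflexivity.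
  - reflexivity.
Qed.

Lemma is_derive_Cmult (f g : R -> C) (x : R) (df dg : C) :
  is_derive f x df -> is_derive g x dg ->
  is_derive (fun y => f y * g y) x (df * g x + f x * dg).
Proof.
  intros Hf Hg.
  pose proof (is_derive_Re _ _ _ Hf) as Hf1. pose proof (is_derive_Im _ _ _ Hf) as Hf2.
  pose proof (is_derive_Re _ _ _ Hg) as Hg1. pose proof (is_derive_Im _ _ _ Hg) as Hg2.
  apply is_derive_C_parts.
  - pose proof (is_derive_minus _ _ _ _ _ (is_derive_mult _ _ _ _ _ Hf1 Hg1 Rmult_comm)
                                          (is_derive_mult _ _ _ _ _ Hf2 Hg2 Rmult_comm)) as D.
    eapply is_derive_ext; [intros y | refine (eq_rect _ (is_derive _ x) D _ _)];
      unfold minus, plus, opp, mult, Re, Im; simpl; ring.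
  - pose proof (is_derive_plus _ _ _ _ _ (is_derive_mult _ _ _ _ _ Hf1 Hg2 Rmult_comm)
                                         (is_derive_mult _ _ _ _ _ Hf2 Hg1 Rmult_comm)) as D.
    eapply is_derive_ext; [intros y | refine (eq_rect _ (is_derive _ x) D _ _)];
      unfold plus, mult, Re, Im; simpl; ring.
Qed.

Lemma is_derive_Cminus (f g : R -> C) (x : R) (df dg : C) :
  is_derive f x df -> is_derive g x dg -> is_derive (fun y => f y - g y) x (df - dg).
Proof. exact (is_derive_minus f g x df dg). Qed.

Lemma is_derive_Cexp (w : R -> C) (x : R) (dw : C) :
  is_derive w x dw -> is_derive (fun y => Cexp (w y)) x (dw * Cexp (w x)).
Proof.
  intros Hw.
  pose proof (is_derive_comp exp _ x _ _ (is_derive_exp _) (is_derive_Re _ _ _ Hw)) as E.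
  pose proof (is_derive_comp cos _ x _ _ (is_derive_cos _) (is_derive_Im _ _ _ Hw)) as Co.
  pose proof (is_derive_comp sin _ x _ _ (is_derive_sin _) (is_derive_Im _ _ _ Hw)) as Si.
  apply is_derive_C_parts; unfold Cexp; simpl.
  - refine (eq_rect _ (is_derive _ x) (is_derive_mult _ _ _ _ _ E Co Rmult_comm) _ _).
    unfold plus, mult, scal; simpl; unfold mult, Re, Im; simpl. ring.
  - refine (eq_rect _ (is_derive _ x) (is_derive_mult _ _ _ _ _ E Si Rmult_comm) _ _).
    unfold plus, mult, scal; simpl; unfold mult, Re, Im; simpl. ring.
Qed.

Lemma is_derive_Caffine (f : R -> C) (a b : C) (x : R) :
  (forall y, f y = a * RtoC y + b) -> is_derive f x a.
Proof.
  intros Hf. apply (is_derive_ext (fun y => a * RtoC y + b)); [congruence |].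
  apply is_derive_C_parts; simpl; auto_derive; trivial; apply Rmult_1_r.
Qed.

Definition mtr (A : mat3) : C := A 0%nat 0%nat + A 1%nat 1%nat + A 2%nat 2%nat.

(* The matrix by which A acts on the exterior square of C^3, identified with C^3
   through the cross product. *)
Definition mwedge (A : mat3) : mat3 :=
  fun p q => (if Nat.eqb p q then mtr A else 0) - A q p.

Lemma mv_ext3 (A B : mat3) (v : vec3) (i : nat) :
  (forall p q, (p < 3)%nat -> (q < 3)%nat -> A p q = B p q) ->
  (i < 3)%nat -> mv A v i = mv B v i.
Proof. intros HAB Hi. unfold mv. rewrite !HAB by lia. reflexivity. Qed.

Lemma cross_mv (A : mat3) (v w : vec3) (i : nat) : (i < 3)%nat ->
  cross (mv A v) w i + cross v (mv A w) i = mv (mwedge A) (cross v w) i.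
Proof.
  intros Hi. unfold mv, mwedge, mtr.
  destruct i as [|[|[|i]]]; [| | | lia]; simpl; ring.
Qed.

Lemma is_derive_cross (v w : R -> vec3) (A : mat3) (s : R) :
  (forall j, (j < 3)%nat -> is_derive (fun y => v y j) s (mv A (v s) j)) ->
  (forall j, (j < 3)%nat -> is_derive (fun y => w y j) s (mv A (w s) j)) ->
  forall i, (i < 3)%nat ->
  is_derive (fun y => cross (v y) (w y) i) s (mv (mwedge A) (cross (v s) (w s)) i).
Proof.
  intros Hv Hw i Hi. rewrite <- cross_mv by exact Hi.
  assert (Hvw : forall p q, (p < 3)%nat -> (q < 3)%nat ->
    is_derive (fun y => v y p * w y q) s (mv A (v s) p * w s q + v s p * mv A (w s) q)).
  { intros p q Hp Hq. apply is_derive_Cmult; auto. }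
  destruct i as [|[|[|i]]]; [| | | lia];
    (eapply is_derive_eq_val; [| apply is_derive_Cminus; apply Hvw; lia]);
    simpl; ring.
Qed.

Lemma is_derive_phase_cross (th : R -> C) (v w : R -> vec3) (A : mat3) (s : R) (c : C) :
  is_derive th s c ->
  (forall j, (j < 3)%nat -> is_derive (fun y => v y j) s (mv A (v s) j)) ->
  (forall j, (j < 3)%nat -> is_derive (fun y => w y j) s (mv A (w s) j)) ->
  forall i, (i < 3)%nat ->
  is_derive (fun y => vscal (Cexp (th y)) (cross (v y) (w y)) i) s
    (mv (madd (mscal c mid) (mwedge A)) (vscal (Cexp (th s)) (cross (v s) (w s))) i).
Proof.
  intros Hth Hv Hw i Hi. unfold vscal.
  eapply is_derive_eq_val;
    [| apply is_derive_Cmult; [apply is_derive_Cexp, Hth | exact (is_derive_cross v w A s Hv Hw i Hi)]].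
  unfold mv, madd, mscal, mid.
  destruct i as [|[|[|i]]]; [| | | lia]; simpl; ring.
Qed.

Lemma Cconj_0 : Cconj 0 = 0.
Proof. unfold Cconj. simpl. rewrite Ropp_0. reflexivity. Qed.

Lemma Xmat_wedge (k u1 u2 : C) :
  forall p q, (p < 3)%nat -> (q < 3)%nat ->
  Xmat k (Umat u1 u2) p q =
  madd (mscal (Ci * k) mid) (mwedge (Xtmat k (mconj (Umat u1 u2)))) p q.
Proof.
  intros p q Hp Hq. unfold Xmat, Xtmat, madd, mscal, mconj, mwedge, mtr, mid, Defs.sigma.
  destruct p as [|[|[|p]]]; try lia; destruct q as [|[|[|q]]]; try lia; simpl;
    rewrite ?Copp_conj, ?Cconj_conj, ?Cconj_0; ring.
Qed.

Lemma Tmat_wedge (a1 a2 uo : R) (k l u1 u2 v1 v2 w1 w2 : C) :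
  l ^ 2 = k ^ 2 + RtoC (uo ^ 2) -> forall p q, (p < 3)%nat -> (q < 3)%nat ->
  Tmat a1 a2 uo k (Umat u1 u2) (Umat v1 v2) (Umat w1 w2) p q =
  madd (mscal (Ci * - (RtoC a1 * (k ^ 2 + l ^ 2) - 4 * RtoC a2 * k ^ 3)) mid)
       (mwedge (Ttmat a1 a2 uo k (mconj (Umat u1 u2)) (mconj (Umat v1 v2))
                                 (mconj (Umat w1 w2)))) p q.
Proof.
  intros Hl p q Hp Hq. rewrite Hl.
  unfold Tmat, Ttmat, madd, msub, mm, mid, mscal, mconj, mwedge, mtr, Defs.sigma.
  destruct p as [|[|[|p]]]; try lia; destruct q as [|[|[|q]]]; try lia; simpl;
    rewrite ?Copp_conj, ?Cconj_conj, ?Cconj_0; ring.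
Qed.

Lemma lpar_sq (uo : R) (z : C) : z <> 0 ->
  lpar uo z ^ 2 = kpar uo z ^ 2 + RtoC (uo ^ 2).
Proof. intros hz. unfold lpar, kpar. field. exact hz. Qed.

Lemma is_derive_phase_x (a1 a2 uo : R) (z : C) (x t : R) :
  is_derive (fun y => Ci * h2 a1 a2 uo z y t) x (Ci * kpar uo z).
Proof.
  apply (is_derive_Caffine _ _ (Ci * (h2 a1 a2 uo z x t - kpar uo z * RtoC x))).
  intros y. unfold h2. ring.
Qed.

Lemma is_derive_phase_t (a1 a2 uo : R) (z : C) (x t : R) :
  is_derive (fun s => Ci * h2 a1 a2 uo z x s) t
    (Ci * - (RtoC a1 * (kpar uo z ^ 2 + lpar uo z ^ 2) - 4 * RtoC a2 * kpar uo z ^ 3)).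
Proof.
  apply (is_derive_Caffine _ _ (Ci * kpar uo z * RtoC x)).
  intros s. unfold h2. ring.
Qed.

Theorem proposition3
  (uo a1 a2 : R) (huo : (0 < uo)%R)
  (u1 u2 u1x u2x u1xx u2xx : R -> R -> C)
  (hu1x : forall x t : R, is_derive (fun y => u1 y t) x (u1x x t))
  (hu2x : forall x t : R, is_derive (fun y => u2 y t) x (u2x x t))
  (hu1xx : forall x t : R, is_derive (fun y => u1x y t) x (u1xx x t))
  (hu2xx : forall x t : R, is_derive (fun y => u2x y t) x (u2xx x t))
  (z : C) (hz : z <> RtoC 0)
  (nu1 nu2 : R -> R -> vec3)
  (hnu_x : forall (nu : R -> R -> vec3), (nu = nu1 \/ nu = nu2) ->
     forall (x t : R) (i : nat), (i < 3)%nat ->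
       is_derive (fun y => nu y t i) x
         (mv (Xtmat (kpar uo z) (mconj (Umat (u1 x t) (u2 x t)))) (nu x t) i))
  (hnu_t : forall (nu : R -> R -> vec3), (nu = nu1 \/ nu = nu2) ->
     forall (x t : R) (i : nat), (i < 3)%nat ->
       is_derive (fun s => nu x s i) t
         (mv (Ttmat a1 a2 uo (kpar uo z)
                (mconj (Umat (u1 x t) (u2 x t)))
                (mconj (Umat (u1x x t) (u2x x t)))
                (mconj (Umat (u1xx x t) (u2xx x t)))) (nu x t) i)) :
  let nu : R -> R -> vec3 :=
    fun x t => vscal (Cexp (Ci * h2 a1 a2 uo z x t)) (cross (nu1 x t) (nu2 x t)) in
  forall (x t : R) (i : nat), (i < 3)%nat ->
    is_derive (fun y => nu y t i) x
      (mv (Xmat (kpar uo z) (Umat (u1 x t) (u2 x t))) (nu x t) i)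
    /\
    is_derive (fun s => nu x s i) t
      (mv (Tmat a1 a2 uo (kpar uo z)
             (Umat (u1 x t) (u2 x t))
             (Umat (u1x x t) (u2x x t))
             (Umat (u1xx x t) (u2xx x t))) (nu x t) i).
Proof.
  intros nu x t i Hi. split.
  - rewrite (mv_ext3 _ _ _ i (Xmat_wedge (kpar uo z) (u1 x t) (u2 x t)) Hi).
    apply (is_derive_phase_cross (fun y => Ci * h2 a1 a2 uo z y t)
             (fun y => nu1 y t) (fun y => nu2 y t)); [| | | exact Hi].
    + apply is_derive_phase_x.
    + exact (hnu_x nu1 (or_introl eq_refl) x t).
    + exact (hnu_x nu2 (or_intror eq_refl) x t).
  - rewrite (mv_ext3 _ _ _ i (Tmat_wedge a1 a2 uo _ _ _ _ _ _ _ _ (lpar_sq uo z hz)) Hi).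
    apply (is_derive_phase_cross (fun s => Ci * h2 a1 a2 uo z x s)
             (fun s => nu1 x s) (fun s => nu2 x s)); [| | | exact Hi].
    + apply is_derive_phase_t.
    + exact (hnu_t nu1 (or_introl eq_refl) x t).
    + exact (hnu_t nu2 (or_intror eq_refl) x t).
Qed.
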